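(* Every reduced spherical curve $P$ has at least one of the following: (i) a bigon; (ii) a trigon $R$ and a region $R'\neq R$ such that $R'$ is a trigon or a $4$-gon and $R'$ shares an edge or a crossing with $R$. Here the regions sharing an edge or a crossing with a trigon are the six regions around it: three share an edge with it, and three are diagonally opposite to it at its crossings.
   Context: A spherical curve is a smooth immersion $P:S^1\to S^2$ whose self-intersections are finitely many transverse double points, called crossings. It has at least one crossing. Regions are the components of $S^2\setminus P(S^1)$, and edges are the arcs of the curve between consecutive crossings. An $n$-gon is a region whose boundary consists of $n$ edges; a bigon is a $2$-gon and a trigon is a $3$-gon. A crossing $p$ is reducible if only three distinct regions (rather than four) meet at $p$; equivalently, no other crossing is interlaced with $p$ in the Gauss word. $P$ is reduced if it has no reducible crossing. *)

(* Combinatorial model of a spherical curve as a 4-valent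
   oriented planar map. *)
From mathcomp Require Import all_boot.
Set Implicit Arguments. Unset Strict Implicit. Unset Printing Implicit Defensive.

Section SphericalCurve.
Variable D : finType.   (* darts = half-edges of the projection graph *)
Variables (e n : D -> D).
(* e : pairs the two half-edges of an edge (arc between consecutive crossings);
   n : rotates counterclockwise through the 4 half-edges at a crossing. *)

(* Face (region) tracing permutation: orbits = regions; a dart d in a face
   orbit stands for the boundary edge {d, e d} of that region. *)
Definition face_perm (d : D) : D := n (e d).
(* Going straight through a crossing: orbits = oriented components of the curve. *)
Definition straight (d : D) : D := n (n (e d)).

Definition same_vertex (x y : D) : bool := fconnect n x y.
Definition same_face (x y : D) : bool := fconnect face_perm x y.
Definition face_size (d : D) : nat := order face_perm d.

Definition map_step : rel D := fun a b => (b == n a) || (b == e a).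

Record spherical_curve : Prop := {
  sc_nonempty : 0 < #|D|;
  sc_e_invol : involutive e;
  sc_e_nofix : forall d, e d != d;
  sc_n_inj : injective n;
  sc_n_deg4 : forall d, order n d = 4;
  sc_connected : forall x y, connect map_step x y;
  (* Euler characteristic 2: V - E + F = 2, i.e. the map is on the sphere *)
  sc_planar : fcard n D + fcard face_perm D = fcard e D + 2;
  (* one immersed circle: exactly two oriented straight-ahead traversals *)
  sc_one_component : fcard straight D = 2
}.

(* The crossing of d is reducible iff fewer than four distinct regions meet
   there, i.e. two distinct darts at it lie on the same region. *)
Definition reducible_at (d : D) : Prop :=
  exists x y, [/\ same_vertex d x, same_vertex d y, x != y & same_face x y].

Definition reduced : Prop := forall d, ~ reducible_at d.

Definition is_bigon (d : D) : Prop := face_size d = 2.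
Definition is_trigon (d : D) : Prop := face_size d = 3.

Definition share_edge (y z : D) : Prop :=
  exists2 x, same_face y x & same_face z (e x).
Definition share_crossing (y z : D) : Prop :=
  exists x w, [/\ same_face y x, same_face z w & same_vertex x w].

End SphericalCurve.

(* Discharging.  Give every dart (side of an edge, seen from a region) the
   charge 6, so the total charge is 6 |D|, while Euler's formula for a
   4-valent map gives 4 F = |D| + 8 regions.  If there is no bigon and no
   trigon sees a trigon or a 4-gon among its six surrounding regions, each
   trigon can collect 1 from each of its six neighbours (one dart of the
   neighbour pays), raising its charge to 24; every payer is a k-gon with
   k >= 5, no dart pays twice, so a paying region keeps at least 5k >= 24.
   Reducedness excludes monogons and keeps the neighbours of a region
   distinct from it.  Hence 24 F <= 6 |D|, contradicting 4 F = |D| + 8. *)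
From mathcomp Require Import all_boot zify.
From Stdlib Require Import Classical.
Set Implicit Arguments. Unset Strict Implicit. Unset Printing Implicit Defensive.

Section Orbits.
Variables (T : finType) (f : T -> T).

Lemma iter_neq_lt_order x i : 0 < i < order f x -> iter i f x != x.
Proof.
case/andP=> i_gt0 lt_i_ord; apply/eqP=> iter_i_x.
have := findex_iter lt_i_ord; rewrite iter_i_x /findex /orbit -orderSpred /=.
by rewrite eqxx => i0; rewrite -i0 in i_gt0.
Qed.

Lemma fcard_mul_leq_sum (c : nat) (w : T -> nat) :
  injective f -> (forall x, c <= order f x * w x) -> c * fcard f T <= \sum_x w x.
Proof.
move=> f_inj c_le; have f_sym := fconnect_sym f_inj.
have orbit_sum r : froots f r -> c <= \sum_(x | froot f x == r) w x.
  move=> r_root.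
  have root_r x : (froot f x == r) = fconnect f r x.
    by rewrite -{1}(eqP r_root) eq_sym (root_connect f_sym).
  have order_r x : froot f x == r -> order f x = order f r.
    by rewrite root_r => rx; apply/esym/eq_card/same_connect.
  have card_r : #|[pred x | froot f x == r]| = order f r.
    by apply: eq_card => x; rewrite inE root_r.
  rewrite -(leq_pmul2l (order_gt0 f r)) big_distrr /= -card_r -sum_nat_const.
  by apply: leq_sum => x rx; rewrite card_r -(order_r x rx).
rewrite (partition_big (froot f) (froots f)) => [|x _]; last first.
  exact: (roots_root f_sym).
apply: (@leq_trans (\sum_(r | froots f r) c)); last exact: leq_sum.
rewrite sum_nat_const mulnC.
by apply/leq_mul/leqnn/eq_leq/eq_card => x; rewrite !inE andbT.
Qed.

End Orbits.

Section SphericalCurveFacts.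
Variables (D : finType) (e n : D -> D).
Hypothesis sc : spherical_curve e n.

Local Notation face_perm := (face_perm e n).
Local Notation same_face := (same_face e n).
Local Notation face_size := (face_size e n).
Local Notation same_vertex := (same_vertex n).

Lemma e_inj : injective e. Proof. exact/inv_inj/(sc_e_invol sc). Qed.

Lemma face_perm_inj : injective face_perm.
Proof. by move=> x y /(sc_n_inj sc)/e_inj. Qed.

Lemma n_iter_neq x i : 0 < i < 4 -> iter i n x != x.
Proof. by rewrite -(sc_n_deg4 sc x); apply: iter_neq_lt_order. Qed.

Lemma n4K x : n (n (n (n x))) = x.
Proof. by have := iter_order (sc_n_inj sc) x; rewrite (sc_n_deg4 sc). Qed.

Lemma same_face_sym x y : same_face x y = same_face y x.
Proof. exact: (fconnect_sym face_perm_inj). Qed.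

Lemma same_face_trans y x z : same_face x y -> same_face y z -> same_face x z.
Proof. exact: connect_trans. Qed.

Lemma same_vertex_iter x i : same_vertex x (iter i n x).
Proof. exact: fconnect_iter. Qed.

Lemma same_face_e_n x : same_face (e x) (n x).
Proof. by have := fconnect1 face_perm (e x); rewrite /face_perm (sc_e_invol sc). Qed.

Lemma card_darts_vertices : fcard n D * 4 = #|D|.
Proof.
apply: (fcard_order_set (sc_n_inj sc)) => [|x y _ //].
by apply/subsetP => x _; rewrite inE (sc_n_deg4 sc).
Qed.

Lemma card_darts_edges : fcard e D * 2 = #|D|.
Proof.
apply: (fcard_order_set e_inj) => [|x y _ //].
apply/subsetP => x _; rewrite inE (@order_cycle _ e [:: x; e x]) //.
- by rewrite /= (sc_e_invol sc) !eqxx.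
- by rewrite /= inE andbT eq_sym (sc_e_nofix sc).
- by rewrite inE eqxx.
Qed.

Lemma euler_faces : fcard face_perm D * 4 = #|D| + 8.
Proof.
have V := card_darts_vertices; have E := card_darts_edges.
have := sc_planar sc; lia.
Qed.

End SphericalCurveFacts.

Section ReducedCurve.
Variables (D : finType) (e n : D -> D).
Hypotheses (sc : spherical_curve e n) (red : reduced e n).

Local Notation same_face := (same_face e n).
Local Notation face_size := (face_size e n).
Local Notation same_vertex := (same_vertex n).

Lemma reduced_distinct_faces x y :
  same_vertex x y -> x != y -> ~~ same_face x y.
Proof.
move=> xy x_neq_y; apply/negP=> fxy; apply: (red (d := x)).
by exists x, y; split => //; apply: connect0.
Qed.

Lemma not_same_face_e x : ~~ same_face x (e x).
Proof.
apply: contraNN (reduced_distinct_faces (same_vertex_iter n x 1) _).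
  by move/same_face_trans; apply; apply: same_face_e_n.
by rewrite eq_sym (n_iter_neq sc).
Qed.

(* The region of [e x] lies across the edge of [x]; the region of [opposite x]
   is diagonally opposite to the region of [x] at the crossing where [x] ends. *)
Definition opposite (x : D) : D := n (n (n (e x))).

Lemma not_same_face_opposite x : ~~ same_face x (opposite x).
Proof.
have x_nex : same_face x (n (e x)) by exact: fconnect1.
apply: contraNN (reduced_distinct_faces (same_vertex_iter n (n (e x)) 2) _).
  by apply: (same_face_trans (y := x)); rewrite (same_face_sym sc).
by rewrite eq_sym (n_iter_neq sc).
Qed.

Lemma face_size_gt1 x : 1 < face_size x.
Proof.
rewrite /face_size ltn_neqAle order_gt0 andbT; apply/negP => /eqP/esym order1.
have fixed : n (e x) = x.
  by have := iter_order (face_perm_inj sc) x; rewrite order1.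
have ex_nx : same_vertex (e x) (n x).
  by have := same_vertex_iter n (e x) 2; rewrite /= fixed.
have : e x != n x.
  by apply/eqP=> ex_eq; have := n_iter_neq sc x (i := 2); rewrite /= -ex_eq fixed eqxx => /(_ isT).
by move=> ex_neq_nx; have := reduced_distinct_faces ex_nx ex_neq_nx; rewrite (same_face_e_n sc).
Qed.

End ReducedCurve.

Section Discharging.
Variables (D : finType) (e n : D -> D).
Hypotheses (sc : spherical_curve e n) (red : reduced e n).
Hypothesis no_bigon : forall x, ~ is_bigon e n x.
Hypothesis no_close_trigons : forall y z : D,
  is_trigon e n y -> is_trigon e n z \/ face_size e n z = 4 ->
  ~~ same_face e n y z -> share_edge e n y z \/ share_crossing e n y z -> False.

Local Notation same_face := (same_face e n).
Local Notation face_size := (face_size e n).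
Local Notation opposite := (opposite e n).

Lemma face_size_gt2 x : 2 < face_size x.
Proof.
by rewrite ltn_neqAle eq_sym face_size_gt1 // andbT; apply/eqP/no_bigon.
Qed.

Lemma near_small_not_trigon y z : face_size z <= 4 -> ~~ same_face y z ->
  share_edge e n y z \/ share_crossing e n y z -> face_size y != 3.
Proof.
move=> z_le4 yz near; apply/eqP=> y3; apply: no_close_trigons near => //.
move: z_le4 (face_size_gt2 z); rewrite /is_trigon.
by case: (face_size z) => [|[|[|[|[|k]]]]] //; auto.
Qed.

Definition trigon_nbrs (x : D) : nat :=
  (face_size (e x) == 3) + (face_size (opposite x) == 3).

Lemma trigon_nbrs_small x : face_size x <= 4 -> trigon_nbrs x = 0.
Proof.
move=> x_le4; rewrite /trigon_nbrs.
have across : face_size (e x) != 3.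
  apply: near_small_not_trigon x_le4 _ _.
    by rewrite (same_face_sym sc) not_same_face_e.
  left; exists (e x); first exact: connect0.
  by rewrite (sc_e_invol sc); apply: connect0.
have opp : face_size (opposite x) != 3.
  apply: near_small_not_trigon x_le4 _ _.
    by rewrite (same_face_sym sc) not_same_face_opposite.
  right; exists (opposite x), (n (e x)); split; first exact: connect0.
    exact: fconnect1.
  by rewrite /same_vertex (fconnect_sym (sc_n_inj sc)); apply: same_vertex_iter n _ 2.
by rewrite (negbTE across) (negbTE opp).
Qed.

Lemma trigon_nbrs_le1 x : trigon_nbrs x <= 1.
Proof.
suff : face_size (opposite x) == 3 -> face_size (e x) != 3.
  by rewrite /trigon_nbrs; case: (_ == 3) (_ == 3) => [] [] // /(_ isT).
move=> /eqP opp3; apply: (near_small_not_trigon (z := opposite x)); first by rewrite opp3.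
  apply: (reduced_distinct_faces red); first exact: same_vertex_iter n _ 3.
  by rewrite eq_sym; apply: (n_iter_neq sc _ (i := 3)).
left; exists (e (opposite x)); last by rewrite (sc_e_invol sc); apply: connect0.
rewrite (same_face_sym sc); have := fconnect1 (face_perm e n) (e (opposite x)).
by rewrite /face_perm (sc_e_invol sc) /opposite (n4K sc).
Qed.

Definition charge (x : D) : nat := 6 + 2 * (face_size x == 3) - trigon_nbrs x.

Lemma face_size_charge x : 24 <= face_size x * charge x.
Proof.
rewrite /charge; move: (face_size_gt2 x) (trigon_nbrs_le1 x) (@trigon_nbrs_small x).
case: (face_size x) (trigon_nbrs x) => [|[|[|[|[|k]]]]] t //= _ t_le1 t_small;
  try by rewrite t_small.
nia.
Qed.

(* Reindexing by [e] and [opposite] shows that the trigons receive in total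
   exactly what their neighbours pay. *)
Lemma sum_charge : \sum_x charge x = 6 * #|D|.
Proof.
have opposite_inj : injective opposite.
  by move=> x y /(sc_n_inj sc)/(sc_n_inj sc)/(sc_n_inj sc)/(e_inj sc).
have paid : \sum_x trigon_nbrs x = 2 * \sum_x (face_size x == 3 : nat).
  rewrite big_split /= mul2n -addnn; congr (_ + _).
    exact/esym/(reindex_inj (e_inj sc)).
  exact/esym/(reindex_inj opposite_inj).
have charge_paid : \sum_x charge x + \sum_x trigon_nbrs x =
                   \sum_x (6 + 2 * (face_size x == 3)).
  rewrite -big_split /=; apply: eq_bigr => x _; rewrite subnK //.
  exact: leq_trans (trigon_nbrs_le1 x) (leq_addr _ _).
move: charge_paid; rewrite paid big_split /= -big_distrr /= sum_nat_const.
by change #|xpredT| with #|D| => /addIn ->; rewrite mulnC.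
Qed.

Lemma discharging_absurd : False.
Proof.
have := fcard_mul_leq_sum (face_perm_inj sc) face_size_charge.
have := euler_faces sc; rewrite sum_charge; lia.
Qed.

End Discharging.

Theorem mainTheorem8 (D : finType) (e n : D -> D) :
  spherical_curve e n -> reduced e n ->
  (exists d : D, is_bigon e n d) \/
  (exists y z : D,
     [/\ is_trigon e n y,
         is_trigon e n z \/ face_size e n z = 4,
         ~~ same_face e n y z &
         share_edge e n y z \/ share_crossing e n y z]).
Proof.
move=> sc red; apply: NNPP => no_config.
apply: (discharging_absurd sc red) => [x bigon | y z y3 z34 yz near].
  by apply: no_config; left; exists x.
by apply: no_config; right; exists y, z.
Qed.
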